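(* Let $(X_{a,s})_{s\ge1}$ be i.i.d. random variables with values in $[0,1]$ and mean $\mu_a$, and let $\mu_1$ satisfy $\mu_a<\mu_1<1$. For $\epsilon>0$ and an integer $n\ge3$ let \[K_n=\left\lfloor\frac{1+\epsilon}{d(\mu_a,\mu_1)}\big(\log(n)+3\log(\log(n))\big)\right\rfloor.\] Then for each $\epsilon>0$ there exist $C_2(\epsilon)>0$ and $\beta(\epsilon)>0$ (depending also on $\mu_a,\mu_1$) such that for all $n\ge3$, \[\sum_{s=K_n+1}^\infty\mathbb{P}\left(d^+(\hat\mu_{a,s},\mu_1)<\frac{d(\mu_a,\mu_1)}{1+\epsilon}\right)\le\frac{C_2(\epsilon)}{n^{\beta(\epsilon)}}.\]
   Context: $\hat\mu_{a,s}=(X_{a,1}+\dots+X_{a,s})/s$. $d(p,q)=p\log\frac pq+(1-p)\log\frac{1-p}{1-q}$ for $p,q\in[0,1]$ (conventions $0\log0=0\log(0/0)=0$, $x\log(x/0)=+\infty$ for $x>0$), and $d^+(x,y)=d(x,y)\mathbb{1}\{x<y\}$. *)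

From HB Require Import structures.
From mathcomp Require Import all_boot all_order all_algebra.
From mathcomp Require Import all_classical all_reals all_analysis.
Set Implicit Arguments. Unset Strict Implicit. Unset Printing Implicit Defensive.
Import Order.TTheory GRing.Theory Num.Theory.
Local Open Scope classical_set_scope.
Local Open Scope ring_scope.

Definition xlogxy {R : realType} (x y : R) : \bar R :=
  if x == 0 then 0%E else if y == 0 then +oo%E else (x * ln (x / y))%:E.

Definition kl {R : realType} (p q : R) : \bar R :=
  (xlogxy p q + xlogxy (1 - p) (1 - q))%E.

Definition klplus {R : realType} (x y : R) : \bar R :=
  if x < y then kl x y else 0%E.

(* empirical mean of the first s samples X 0, ..., X (s-1)
   (i.e. X_{a,1}, ..., X_{a,s} in the paper's 1-based indexing) *)
Definition emp_mean {R : realType} {T : Type} (X : nat -> T -> R) (s : nat) (w : T) : R :=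
  (\sum_(i < s) X i w) / s%:R.

Definition iid {R : realType} {d : measure_display} {T : measurableType d}
    (P : probability T R) (X : nat -> {RV P >-> R}) : Prop :=
  (forall (s : seq nat) (B : nat -> set R), uniq s -> (forall i, measurable (B i)) ->
     P (\bigcap_(i in [set` s]) (X i @^-1` B i)) = (\prod_(i <- s) P (X i @^-1` B i))%E) /\
  (forall (i : nat) (B : set R), measurable B -> P (X i @^-1` B) = P (X 0%N @^-1` B)).

Arguments iid {R d T} P X.

(* K_n = floor( (1+eps)/d(mu_a,mu_1) * (log n + 3 log log n) ) ; the argument is
   positive for n >= 3, so truncn coincides with floor. *)
Definition Kn {R : realType} (mua mu1 eps : R) (n : nat) : nat :=
  Num.truncn ((1 + eps) / fine (kl mua mu1) * (ln n%:R + 3 * ln (ln n%:R))).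

From HB Require Import structures.
From mathcomp Require Import all_boot all_order all_algebra.
From mathcomp Require Import all_classical all_reals all_analysis.
From mathcomp Require Import ring lra.
Import Order.TTheory GRing.Theory Num.Theory.
Local Open Scope classical_set_scope.
Local Open Scope ring_scope.
Set Implicit Arguments.
Unset Strict Implicit.
Unset Printing Implicit Defensive.

(* The event d+(mu_s, mu1) < d(mua, mu1)/(1+eps) forces the empirical mean
   mu_s above some threshold x > mua. Such an x comes without any continuity
   argument from the variational lower bound d(y, q) >= l y - ln(1 - q + q e^l),
   which is affine in y. A Chernoff bound makes P(mu_s >= x) at most rho^s with
   rho < 1, so the tail of the series from K_n + 1 is at most
   rho^(K_n + 1) / (1 - rho); since K_n + 1 >= (1 + eps)/d(mua, mu1) log n + O(1),
   this is C n^(-beta) with beta = -(1 + eps) ln rho / d(mua, mu1).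
   Independence is only assumed for events, so the Chernoff bound is proved by
   rounding each X_i up to a grid of mesh 1/m, a union bound over the cell
   assignments of X_0, ..., X_(s-1), and the product rule for each of them. *)

Section KLDivergence.
Variable R : realType.
Implicit Types (c l q t x y z : R).

Definition klr q y : R := y * ln (y / q) + (1 - y) * ln ((1 - y) / (1 - q)).

Lemma ln_le_sub1 z : 0 < z -> ln z <= z - 1.
Proof. by move=> z0; have := expR_ge1Dx (ln z); rewrite lnK ?posrE //; lra. Qed.

Lemma ln_ge1subV z : 0 < z -> 1 - z^-1 <= ln z.
Proof.
move=> z0; have zV0 : 0 < z^-1 by rewrite invr_gt0.
have := ln_le_sub1 zV0.
by rewrite lnV ?posrE //; lra.
Qed.

Lemma mul_ln_div_ge y q c : 0 <= y -> 0 < q -> 0 < c ->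
  y * (1 + ln c) - c * q <= y * ln (y / q).
Proof.
move=> y0 q0 c0; have [->|yn0] := eqVneq y 0.
  by rewrite !mul0r; have := mulr_gt0 c0 q0; lra.
have yp : 0 < y by rewrite lt_neqAle eq_sym yn0.
have cq0 : 0 < c * q by rewrite mulr_gt0.
have -> : y / q = y / (c * q) * c by field; rewrite !gt_eqF.
rewrite lnM ?posrE ?divr_gt0 //.
have := ln_ge1subV (divr_gt0 yp cq0); rewrite invf_div.
rewrite -(ler_pM2l yp) mulrBr mulr1 mulrCA mulfV ?gt_eqF // mulr1; lra.
Qed.

(* The Donsker-Varadhan lower bound: [klr q] dominates the Legendre transform
   of the log-moment generating function of a Bernoulli(q) variable. *)
Lemma klr_ge_variational y q l : 0 <= y <= 1 -> 0 < q < 1 ->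
  l * y - ln (1 - q + q * expR l) <= klr q y.
Proof.
move=> /andP[y0 y1] /andP[q0 q1].
set E := expR l; set Z := 1 - q + q * E.
have E0 : 0 < E by rewrite expR_gt0.
have Z0 : 0 < Z by rewrite /Z; have := mulr_gt0 q0 E0; lra.
have h1 := mul_ln_div_ge y0 q0 (divr_gt0 E0 Z0).
have y1' : 0 <= 1 - y by lra.
have q1' : 0 < 1 - q by lra.
have ZV0 : 0 < Z^-1 by rewrite invr_gt0.
have h2 := mul_ln_div_ge y1' q1' ZV0.
have lnE : ln E = l by rewrite /E expRK.
rewrite [ln (E / Z)]ln_div ?posrE // lnE in h1.
rewrite lnV ?posrE // in h2.
have k : E / Z * q + Z^-1 * (1 - q) = 1 by rewrite /Z; field; rewrite -/Z gt_eqF.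
rewrite /klr; set L := ln Z in h1 h2 *.
nra.
Qed.

Lemma klr_gt0 y q : 0 <= y -> y < q -> q < 1 -> 0 < klr q y.
Proof.
move=> y0 yq q1; have q0 : 0 < q by lra.
set dl := (q - y) / 2; have dl0 : 0 < dl by rewrite /dl; lra.
have y01 : 0 <= y <= 1 by apply/andP; split; lra.
have q01 : 0 < q < 1 by apply/andP; split; lra.
have := klr_ge_variational (- dl) y01 q01; set e := expR (- dl) => h.
have e0 : 0 < e by rewrite expR_gt0.
have ee : e * (1 + dl) <= 1.
  by have := ler_wpM2l (ltW e0) (expR_ge1Dx dl); rewrite /e -expRD addNr expR0.
have Z0 : 0 < 1 - q + q * e by have := mulr_gt0 q0 e0; lra.
have := ln_le_sub1 Z0.
have k : dl * y < q * (1 - e).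
  have qy : y * (1 + dl) < q by rewrite /dl; nra.
  have : q * dl <= q * (1 - e) * (1 + dl) by nra.
  rewrite -(ltr_pM2r (_ : 0 < 1 + dl)); [nra | lra].
lra.
Qed.

Lemma klr_variational_lt y q t : 0 <= y -> y < q -> q < 1 -> 0 <= t -> t < klr q y ->
  exists2 l, l <= 0 & t < l * y - ln (1 - q + q * expR l).
Proof.
move=> y0 yq q1 t0 tH; have q0 : 0 < q by lra.
have [y_eq0|yn0] := eqVneq y 0.
  move: tH; rewrite y_eq0 /klr mul0r add0r subr0 mul1r.
  rewrite ln_div ?posrE ?subr_gt0 // ln1 add0r => tH.
  have et : 1 - q < expR (- t).
    by rewrite -[1 - q]lnK ?posrE ?subr_gt0 // ltr_expR; lra.
  have eZ : 1 - q + q * ((expR (- t) - 1 + q) / (2 * q)) = (1 - q + expR (- t)) / 2.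
    by field; rewrite gt_eqF.
  exists (ln ((expR (- t) - 1 + q) / (2 * q))).
    apply: ln_le0; rewrite ler_pdivrMr ?mulr_gt0 //.
    suff : expR (- t) <= 1 by lra.
    by rewrite -expR0 ler_expR; lra.
  rewrite mulr0 add0r lnK ?posrE ?divr_gt0 ?mulr_gt0 ?eZ; [|lra..].
  have : ln ((1 - q + expR (- t)) / 2) < ln (expR (- t)).
    by rewrite ltr_ln ?posrE ?expR_gt0 ?divr_gt0 //; lra.
  by rewrite expRK; lra.
(* for 0 < y the supremum over l is attained at l = ln (y / q) - ln ((1 - y) / (1 - q)) *)
have yp : 0 < y by rewrite lt_neqAle eq_sym yn0.
set a := ln (y / q); set b := ln ((1 - y) / (1 - q)).
have a0 : a < 0 by apply: ln_lt0; rewrite divr_gt0 // ltr_pdivrMr // mul1r yq.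
have b0 : 0 < b by apply: ln_gt0; rewrite ltr_pdivlMr ?subr_gt0 // mul1r; lra.
exists (a - b); first lra.
have -> : 1 - q + q * expR (a - b) = ((1 - y) / (1 - q))^-1.
  rewrite expRD expRN /a /b !lnK ?posrE ?divr_gt0 ?subr_gt0 //; try lra.
  by field; rewrite !gt_eqF ?subr_gt0 //; lra.
rewrite lnV ?posrE ?divr_gt0 ?subr_gt0 // -/b; try lra.
by move: tH; rewrite /klr -/a -/b; nra.
Qed.

Lemma klr_ge_left y q t : 0 <= y -> y < q -> q < 1 -> 0 <= t -> t < klr q y ->
  exists x, [/\ y < x, x <= q & forall z, 0 <= z <= 1 -> z < x -> t <= klr q z].
Proof.
move=> y0 yq q1 t0 tH.
have [l l0 hl] := klr_variational_lt y0 yq q1 t0 tH.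
set L := ln (1 - q + q * expR l) in hl.
set w := (l * y - L - t) / (1 - l).
have w0 : 0 < w by rewrite /w divr_gt0; lra.
have hw : w * (1 - l) = l * y - L - t by rewrite /w; field; rewrite gt_eqF //; lra.
exists (Num.min (y + w) q); split; first by rewrite lt_min yq; lra.
  by rewrite ge_min lexx orbT.
move=> z z01; rewrite lt_min => /andP[zx _].
have q01 : 0 < q < 1 by apply/andP; split; lra.
have := klr_ge_variational l z01 q01; rewrite -/L.
have : l * (y + w) <= l * z by rewrite ler_wnM2l //; lra.
nra.
Qed.
End KLDivergence.

Lemma measure_fintype_subadditive {d} {T : measurableType d} {R : realType}
    (mu : {measure set T -> \bar R}) {I : finType} {F : I -> set T} {A : set T} :
  (forall i, measurable (F i)) -> measurable A -> A `<=` \bigcup_i F i ->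
  (mu A <= \sum_(i : I) mu (F i))%E.
Proof.
move=> mF mA AF.
pose G k := oapp (fun j : 'I_#|I| => F (enum_val j)) set0 (insub k).
have -> : (\sum_(i : I) mu (F i) = \sum_(k < #|I|) mu (G k))%E.
  by rewrite (big_enum_val (A := I)); apply: eq_bigr => k _; rewrite /G valK.
apply: content_subadditive => //.
  by move=> k _; rewrite /G; case: insub => [j|] /=; [exact: mF | exact: measurable0].
move=> w /AF [i _ Fiw]; rewrite -bigcup_mkord.
exists (val (enum_rank i)); first exact: ltn_ord.
by rewrite /G valK /= enum_rankK.
Qed.

Lemma expR_mul_le_convex (R : realType) (th l : R) : 0 <= th <= 1 ->
  expR (th * l) <= 1 + th * (expR l - 1).
Proof.
move=> /andP[t0 t1]; have := convex_expR (Itv01 t0 t1) l 0.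
rewrite !convRE /= mulr0 addr0 expR0 mulr1 => h.
by apply: le_trans h _; rewrite /unstable.onem; lra.
Qed.

(* By convexity, [1 + (e^l - 1) mu] bounds the moment generating function at l
   of any [0, 1]-valued variable of mean mu. *)
Lemma exists_mgf_lt_expR (R : realType) (mu y : R) : 0 <= mu -> mu < y -> y <= 1 ->
  exists2 l, 0 < l & 1 + (expR l - 1) * mu < expR (l * y).
Proof.
move=> mu0 muy y1; set l := Num.min (1 / 2 : R) ((y - mu) / 4).
have l0 : 0 < l by rewrite lt_min; apply/andP; split; lra.
have l2 : l <= 1 / 2 by rewrite ge_min lexx.
have l4 : l <= (y - mu) / 4 by rewrite ge_min lexx orbT.
exists l => //; apply: lt_le_trans (expR_ge1Dx _).
have el : expR l * (1 - l) <= 1.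
  by have := ler_wpM2l (expR_ge0 l) (expR_ge1Dx (- l)); rewrite -expRD subrr expR0.
have e1 : expR l - 1 <= l * (1 + 2 * l).
  rewrite -(ler_pM2r (_ : 0 < 1 - l)); last lra.
  suff : 0 <= l * l * (1 - 2 * l) by nra.
  by rewrite mulr_ge0 ?mulr_ge0 //; lra.
have : (expR l - 1) * mu <= l * (1 + 2 * l) * mu by rewrite ler_wpM2r.
have : 2 * l * l * mu <= l * ((y - mu) / 2) by nra.
nra.
Qed.

Section GridChernoff.
Variables (R : realType) (d : measure_display) (T : measurableType d).
Variables (P : probability T R) (X : nat -> {RV P >-> R}).
Hypothesis X_iid : iid P X.
Hypothesis X01 : forall i w, 0 <= X i w <= 1.
Variable mu : R.
Hypothesis EX0 : ('E_P[X 0%N] = mu%:E)%E.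

Lemma measurable_sum_ge (s : nat) (x : R) :
  measurable [set w | s%:R * x <= \sum_(i < s) X i w].
Proof.
have mS : measurable_fun setT (fun w => \sum_(i < s) X i w).
  by apply: measurable_sum => i; exact: measurable_funPT.
have := mS measurableT _ (measurable_itv `[s%:R * x, +oo[%R).
by rewrite setTI; congr measurable; apply/seteqP; split => w /=; rewrite in_itv /= andbT.
Qed.

Lemma mean_ge0 : 0 <= mu.
Proof.
have X0 w : 0 <= X 0%N w by case/andP: (X01 0%N w).
by have := expectation_ge0 P X0; rewrite EX0 lee_fin.
Qed.

Variable m : nat.
Hypothesis m_gt0 : (0 < m)%N.

Let m_gt0R : 0 < (m%:R : R). Proof. by rewrite ltr0n. Qed.

Definition cell (k : nat) : set R := [set` `[k%:R / m%:R, k.+1%:R / m%:R[%R].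

Definition cell_index (y : R) : nat := Num.truncn (y * m%:R).

Lemma measurable_cell k : measurable (cell k).
Proof. exact: measurable_itv. Qed.

Lemma cellE k y : cell k y = (k%:R / m%:R <= y < k.+1%:R / m%:R).
Proof. by rewrite /cell /= in_itv. Qed.

Lemma cell_index_cell y : 0 <= y -> cell (cell_index y) y.
Proof.
move=> y0; rewrite cellE ler_pdivrMr // ltr_pdivlMr //.
exact: truncn_itv (mulr_ge0 y0 (ltW m_gt0R)).
Qed.

Lemma cell_index_eq k y : cell k y -> cell_index y = k.
Proof.
rewrite cellE => /andP[h1 h2]; apply: truncn_def.
by rewrite -ler_pdivrMr // -ltr_pdivlMr // h1 h2.
Qed.

Lemma cell_index_lt y : 0 <= y <= 1 -> (cell_index y < m.+1)%N.
Proof.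
move=> /andP[y0 y1]; rewrite ltnS truncn_le_nat.
have ym : y * m%:R <= m%:R by rewrite ler_piMl.
by apply: le_lt_trans ym _; rewrite ltr_nat.
Qed.

Definition pcell k := fine (P (X 0%N @^-1` cell k)).

Lemma P_cell i k : P (X i @^-1` cell k) = (pcell k)%:E.
Proof.
rewrite X_iid.2; last exact: measurable_cell.
rewrite /pcell fineK //; apply: fin_num_measure.
exact: (measurable_funPTI (X 0%N) (measurable_cell k)).
Qed.

Lemma pcell_ge0 k : 0 <= pcell k.
Proof. by rewrite -lee_fin -(P_cell 0). Qed.

Lemma sum_indic_cell_le (c : R) w : 0 <= c ->
  \sum_(k < m.+1) \1_(X 0%N @^-1` cell k) w * (1 + k%:R / m%:R * c) <= 1 + c * X 0%N w.
Proof.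
move=> c0; have /andP[x0 _] := X01 0%N w.
rewrite (bigD1 (Ordinal (cell_index_lt (X01 0%N w)))) //= big1 ?addr0; last first.
  move=> k kne; rewrite indicE memNset ?mul0r // => /cell_index_eq hk.
  by move: kne; rewrite -(inj_eq val_inj) /= hk eqxx.
rewrite indicE mem_set ?mul1r; last exact: cell_index_cell.
rewrite lerD2l [_ / _ * c]mulrC ler_wpM2l //.
by have := cell_index_cell x0; rewrite cellE => /andP[].
Qed.

Lemma integral_sum_indic_cell (a : 'I_m.+1 -> R) : (forall k, 0 <= a k) ->
  (\int[P]_w (\sum_(k < m.+1) \1_(X 0%N @^-1` cell k) w * a k)%:E =
   (\sum_(k < m.+1) pcell k * a k)%:E)%E.
Proof.
move=> a0; have mA k : measurable (X 0%N @^-1` cell k).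
  exact: (measurable_funPTI (X 0%N) (measurable_cell k)).
under eq_integral do rewrite -sumEFin.
rewrite ge0_integral_sum //; first last.
- by move=> k w _; rewrite lee_fin mulr_ge0.
- move=> k; apply/measurable_realfun.measurable_EFinP.
  exact: measurable_realfun.measurable_funM.
rewrite -sumEFin; apply: eq_bigr => k _.
under eq_integral do rewrite EFinM muleC.
rewrite ge0_integralZl_EFin //; last first.
  by apply/measurable_realfun.measurable_EFinP; exact: measurable_realfun.measurable_indic.
rewrite integral_indic // setIT [X in (_ * X)%E](_ : _ = (pcell k)%:E).
  by rewrite -EFinM mulrC.
exact: P_cell.
Qed.

Lemma integral_affine_X0 (c : R) : 0 <= c ->
  (\int[P]_w (1 + c * X 0%N w)%:E = (1 + c * mu)%:E)%E.
Proof.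
move=> c0; have X0 w : 0 <= X 0%N w by case/andP: (X01 0%N w).
under eq_integral do rewrite EFinD EFinM.
rewrite ge0_integralD //; first last.
- by apply: emeasurable_funM => //; apply/measurable_realfun.measurable_EFinP.
- by move=> w _; rewrite -EFinM lee_fin mulr_ge0.
rewrite integral_cst // [X in (_ * X + _)%E](_ : _ = 1%E) ?mul1e; last exact: probability_setT.
rewrite ge0_integralZl_EFin //.
- by rewrite -expectation_def EX0.
- by move=> w _; rewrite lee_fin.
- by apply/measurable_realfun.measurable_EFinP.
Qed.

Lemma sum_pcell_le (c : R) : 0 <= c ->
  \sum_(k < m.+1) pcell k * (1 + k%:R / m%:R * c) <= 1 + c * mu.
Proof.
move=> c0; have a0 (k : 'I_m.+1) : 0 <= 1 + k%:R / m%:R * c.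
  by rewrite addr_ge0 ?mulr_ge0 ?divr_ge0.
rewrite -lee_fin -integral_affine_X0 // -integral_sum_indic_cell //.
apply: ge0_le_integral => //.
- by move=> w _; rewrite lee_fin sumr_ge0 // => k _; rewrite mulr_ge0.
- apply/measurable_realfun.measurable_EFinP; apply: measurable_sum => k.
  apply: measurable_realfun.measurable_funM => //.
  exact: measurable_realfun.measurable_indic (measurable_funPTI (X 0%N) (measurable_cell k)).
- apply/measurable_realfun.measurable_EFinP.
  by apply: measurable_realfun.measurable_funD => //; apply: measurable_realfun.measurable_funM.
- by move=> w _; rewrite lee_fin sum_indic_cell_le.
Qed.

Definition grid_weight (l : R) (k : 'I_m.+1) := pcell k * expR (l * (k.+1%:R / m%:R)).

Lemma grid_weight_ge0 l k : 0 <= grid_weight l k.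
Proof. by rewrite mulr_ge0 ?pcell_ge0 ?expR_ge0. Qed.

(* Bounding e^(l X) on each cell by its value at the right end point costs the
   factor e^(l/m); on [0, 1] convexity gives e^(l y) <= 1 + y (e^l - 1). *)
Lemma sum_grid_weight_le l : 0 <= l ->
  \sum_(k < m.+1) grid_weight l k <= expR (l / m%:R) * (1 + (expR l - 1) * mu).
Proof.
move=> l0; have el : 0 <= expR l - 1 by have := expR_ge1Dx l; lra.
apply: (le_trans _ (ler_wpM2l (expR_ge0 _) (sum_pcell_le el))).
rewrite mulr_sumr; apply: ler_sum => k _; rewrite /grid_weight.
have -> : l * (k.+1%:R / m%:R) = l / m%:R + k%:R / m%:R * l.
  by rewrite -addn1 natrD; field; rewrite gt_eqF.
rewrite expRD mulrCA; apply: ler_wpM2l; first exact: expR_ge0.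
apply: ler_wpM2l; first exact: pcell_ge0.
apply: expR_mul_le_convex; rewrite divr_ge0 //= ler_pdivrMr // mul1r ler_nat.
by rewrite -ltnS.
Qed.

Variable s : nat.

Definition grid_index (f : {ffun 'I_s -> 'I_m.+1}) (i : nat) : nat :=
  oapp (fun j : 'I_s => nat_of_ord (f j)) 0%N (insub i).

Definition grid_event (f : {ffun 'I_s -> 'I_m.+1}) : set T :=
  \bigcap_(i in [set` iota 0 s]) X i @^-1` cell (grid_index f i).

Definition grid_sum_ge (x : R) (f : {ffun 'I_s -> 'I_m.+1}) : bool :=
  s%:R * x <= \sum_(j < s) (f j).+1%:R / m%:R.

Lemma measurable_grid_event f : measurable (grid_event f).
Proof.
apply: bigcap_measurableType => i _.
exact: (measurable_funPTI (X i) (measurable_cell _)).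
Qed.

Lemma P_grid_event f : P (grid_event f) = (\prod_(j < s) pcell (f j))%:E.
Proof.
rewrite X_iid.1 ?iota_uniq //; last by move=> i; exact: measurable_cell.
have -> : iota 0 s = index_iota 0 s by rewrite /index_iota subn0.
rewrite big_mkord -prodEFin.
by apply: eq_bigr => j _; rewrite /grid_index valK /= P_cell.
Qed.

Lemma sum_ge_sub_grid_events x :
  [set w | s%:R * x <= \sum_(i < s) X i w] `<=`
  \bigcup_f (if grid_sum_ge x f then grid_event f else set0).
Proof.
move=> w /= hw.
pose fw := [ffun j : 'I_s => Ordinal (cell_index_lt (X01 j w))].
have X0 j : 0 <= X j w by case/andP: (X01 j w).
exists fw => //; have -> : grid_sum_ge x fw.
  apply: le_trans hw _; apply: ler_sum => j _; rewrite ffunE /=.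
  by have := cell_index_cell (X0 j); rewrite cellE => /andP[_ /ltW].
move=> i /=; rewrite mem_iota add0n => ilt.
rewrite /grid_index (_ : i = val (Ordinal ilt)) // valK /= ffunE /=.
exact: cell_index_cell.
Qed.

Lemma P_grid_event_le x l f : 0 <= l -> grid_sum_ge x f ->
  (P (grid_event f) <= (expR (- l * (s%:R * x)) * \prod_(j < s) grid_weight l (f j))%:E)%E.
Proof.
move=> l0 hf; rewrite P_grid_event lee_fin /grid_weight big_split /=.
rewrite -expR_sum mulrCA -expRD mulrC.
apply: ler_peMl; first by apply: prodr_ge0 => j _; exact: pcell_ge0.
apply: le_trans (expR_ge1Dx _); rewrite lerDl addrC -mulr_sumr mulNr -mulrBr.
by rewrite mulr_ge0 // subr_ge0.
Qed.

Lemma chernoff_grid x l : 0 <= l ->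
  (P [set w | (s%:R * x <= \sum_(i < s) X i w)%R] <=
   ((expR (- l * x) * expR (l / m%:R) * (1 + (expR l - 1) * mu)) ^+ s)%:E)%E.
Proof.
move=> l0.
apply: le_trans (measure_fintype_subadditive P _ (measurable_sum_ge s x)
  (sum_ge_sub_grid_events (x := x))) _.
  by move=> f; case: ifP => _; [exact: measurable_grid_event | exact: measurable0].
apply: (@le_trans _ _ (\sum_(f : {ffun 'I_s -> 'I_m.+1})
    (expR (- l * (s%:R * x)) * \prod_(j < s) grid_weight l (f j))%:E)%E).
  apply: lee_sum => f _; case: ifP => hf; first exact: P_grid_event_le.
  by rewrite measure0 lee_fin mulr_ge0 ?expR_ge0 // prodr_ge0 // => j _; exact: grid_weight_ge0.
rewrite sumEFin lee_fin -mulr_sumr.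
rewrite -(bigA_distr_bigA (fun (j : 'I_s) k => grid_weight l k)) prodr_const card_ord.
have -> : - l * (s%:R * x) = s%:R * (- l * x) by ring.
rewrite expRM_natl -exprMn -mulrA; apply: lerXn2r.
- by rewrite nnegrE mulr_ge0 ?expR_ge0 // sumr_ge0 // => k _; exact: grid_weight_ge0.
- have el : 0 <= expR l - 1 by have := expR_ge1Dx l; lra.
  have := mulr_ge0 el mean_ge0 => elmu.
  by rewrite nnegrE !mulr_ge0 ?expR_ge0 //; lra.
- by apply: ler_wpM2l; [exact: expR_ge0 | exact: sum_grid_weight_le].
Qed.
End GridChernoff.

Lemma chernoff_iid01 (R : realType) (mu x : R) : 0 <= mu -> mu < x -> x <= 1 ->
  exists2 rho : R, 0 < rho < 1 &
  forall d (T : measurableType d) (P : probability T R) (X : nat -> {RV P >-> R}),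
    iid P X -> (forall i w, 0 <= X i w <= 1) -> ('E_P[X 0%N] = mu%:E)%E ->
    forall s : nat, (P [set w | (s%:R * x <= \sum_(i < s) X i w)%R] <= (rho ^+ s)%:E)%E.
Proof.
move=> mu0 mux x1.
(* a grid of mesh 1/m < x - mu keeps the shifted threshold x - 1/m above mu *)
set m := (Num.truncn (x - mu)^-1).+1.
have m0 : (0 < m)%N by [].
have mesh : m%:R^-1 < x - mu.
  by rewrite invf_plt ?posrE ?subr_gt0 //; exact: truncnS_gt.
have mux' : mu < x - m%:R^-1 by lra.
have mV0 : 0 < m%:R^-1 :> R by rewrite invr_gt0.
have x1' : x - m%:R^-1 <= 1 by lra.
have [l l0 hl] := exists_mgf_lt_expR mu0 mux' x1'.
exists (expR (- l * x) * expR (l / m%:R) * (1 + (expR l - 1) * mu)).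
  have B0 : 0 < 1 + (expR l - 1) * mu by have := expR_ge1Dx l; nra.
  rewrite !mulr_gt0 ?expR_gt0 //= -expRD.
  have -> : - l * x + l / m%:R = - (l * (x - m%:R^-1)) by ring.
  by rewrite expRN mulrC ltr_pdivrMr ?expR_gt0 // mul1r.
move=> d T P X X_iid X01 EX0 s.
exact: (chernoff_grid X_iid X01 EX0 m0 s x (ltW l0)).
Qed.

Lemma xlogxy_neq0 (R : realType) (a b : R) : b != 0 -> xlogxy a b = (a * ln (a / b))%:E.
Proof. by move=> b0; rewrite /xlogxy (negbTE b0); case: ifP => // /eqP ->; rewrite mul0r. Qed.

Lemma kl_klr (R : realType) (p q : R) : 0 < q < 1 -> kl p q = (klr q p)%:E.
Proof. by move=> /andP[q0 q1]; rewrite /kl !xlogxy_neq0 ?gt_eqF ?subr_gt0. Qed.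

Lemma klplus_klr (R : realType) (y q : R) : 0 < q < 1 ->
  klplus y q = (if y < q then klr q y else 0)%:E.
Proof. by move=> q01; rewrite /klplus kl_klr //; case: ifP. Qed.

Lemma emp_mean01 (R : realType) (T : Type) (X : nat -> T -> R) s w :
  (forall i, 0 <= X i w <= 1) -> 0 <= emp_mean X s w <= 1.
Proof.
move=> X01; have S0 : 0 <= \sum_(i < s) X i w.
  by apply: sumr_ge0 => i _; case/andP: (X01 i).
case: s S0 => [|s] S0; first by rewrite /emp_mean invr0 mulr0 lexx ler01.
rewrite /emp_mean divr_ge0 //= ler_pdivrMr ?ltr0n // mul1r.
have : \sum_(i < s.+1) X i w <= \sum_(i < s.+1) (1 : R).
  by apply: ler_sum => i _; case/andP: (X01 i).
by rewrite sumr_const card_ord.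
Qed.

Lemma klplus_lt_sub_sum_ge (R : realType) (T : Type) (X : nat -> T -> R) (q x t : R) s :
  (forall i w, 0 <= X i w <= 1) -> 0 < q < 1 -> x <= q ->
  (forall y, 0 <= y <= 1 -> y < x -> t <= klr q y) ->
  [set w | (klplus (emp_mean X s w) q < t%:E)%E] `<=`
  [set w | s%:R * x <= \sum_(i < s) X i w].
Proof.
move=> X01 q01 xq hx w /=; rewrite klplus_klr // lte_fin => h.
have M01 := emp_mean01 s (X01^~ w).
have Mx : x <= emp_mean X s w.
  rewrite leNgt; apply/negP => Mx.
  by have := hx _ M01 Mx; move: h; rewrite (lt_le_trans Mx xq); lra.
case: s Mx {h M01} => [|s]; first by rewrite big_ord0 mul0r.
by rewrite /emp_mean ler_pdivlMr ?ltr0n // mulrC.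
Qed.

Lemma measurable_klplus_lt (R : realType) d (T : measurableType d) (P : probability T R)
    (X : nat -> {RV P >-> R}) (q t : R) s : 0 < q < 1 ->
  measurable [set w | (klplus (emp_mean X s w) q < t%:E)%E].
Proof.
move=> q01; pose g y := if y < q then klr q y else 0.
have mln : measurable_fun setT (@ln R) := @measurable_realfun.measurable_ln R.
have mg : measurable_fun setT g.
  apply: measurable_fun_ifT; last exact: measurable_cst.
    exact: measurable_realfun.measurable_fun_ltr.
  apply: measurable_realfun.measurable_funD; apply: measurable_realfun.measurable_funM;
    try apply: (measurableT_comp mln); try apply: measurable_realfun.measurable_funM;
    by try apply: measurable_realfun.measurable_funB.
have mM : measurable_fun setT (emp_mean X s).
  apply: measurable_realfun.measurable_funM => //.
  by apply: measurable_sum => i; exact: measurable_funPT.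
have := measurableT_comp mg mM measurableT (measurable_itv `]-oo, t[%R).
by rewrite setTI; congr measurable; apply/seteqP; split => w /=;
  rewrite in_itv /= klplus_klr // lte_fin.
Qed.

Lemma nneseries_geometric_tail_le (R : realType) (rho : R) (K : nat) : 0 < rho < 1 ->
  (\sum_(K <= s <oo) (rho ^+ s)%:E <= (rho ^+ K / (1 - rho))%:E)%E.
Proof.
move=> /andP[r0 r1]; apply: lime_le.
  by apply: is_cvg_nneseries => i _ _; rewrite lee_fin exprn_ge0 // ltW.
apply: nearW => N; rewrite sumEFin lee_fin.
have [NK|KN] := leqP N K.
  by rewrite big_geq // divr_ge0 ?exprn_ge0 ?subr_ge0 // ltW.
rewrite -(subnKC (ltnW KN)) geometric_partial_tail.
by apply: geometric_le_lim; rewrite ?exprn_ge0 ?ltW // ger0_norm ?ltW.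
Qed.

Lemma exprn_le_div_powR (R : realType) (rho a c : R) (K n : nat) :
  0 < rho < 1 -> (0 < n)%N -> a * (ln n%:R + c) <= K%:R ->
  rho ^+ K <= expR (a * c * ln rho) / n%:R `^ (- a * ln rho).
Proof.
move=> /andP[r0 r1] n0 hK; have lr : ln rho < 0 by apply: ln_lt0; rewrite r0.
have -> : rho ^+ K = expR (K%:R * ln rho) by rewrite expRM_natl lnK ?posrE.
rewrite /powR gt_eqF ?ltr0n // -expRN -expRD ler_expR.
apply: le_trans (ler_wnM2r (ltW lr) hK) _.
by rewrite [X in _ <= X](_ : _ = a * (ln n%:R + c) * ln rho) //; ring.
Qed.

Lemma Kn_succ_ge (R : realType) (mua mu1 eps : R) (n : nat) :
  0 < (1 + eps) / fine (kl mua mu1) -> (3 <= n)%N ->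
  (1 + eps) / fine (kl mua mu1) * (ln n%:R + 3 * ln (ln 3%:R)) <= (Kn mua mu1 eps n).+1%:R.
Proof.
move=> A0 n3; apply: le_trans (ltW (truncnS_gt _)); rewrite ler_pM2l // lerD2l.
have ln3 : 0 < ln (3%:R : R) by apply: ln_gt0; rewrite ltr1n.
have lnn : ln (3%:R : R) <= ln n%:R by rewrite ler_ln ?posrE ?ltr0n ?ler_nat // (leq_trans _ n3).
by rewrite ler_pM2l // ler_ln ?posrE //; apply: lt_le_trans lnn.
Qed.

Lemma klplus_lt_geometric (R : realType) (mu q t : R) :
  0 <= mu -> mu < q -> q < 1 -> 0 <= t -> t < klr q mu ->
  exists2 rho : R, 0 < rho < 1 &
  forall d (T : measurableType d) (P : probability T R) (X : nat -> {RV P >-> R}),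
    iid P X -> (forall i w, 0 <= X i w <= 1) -> ('E_P[X 0%N] = mu%:E)%E ->
    forall s, (P [set w | klplus (emp_mean X s w) q < t%:E] <= (rho ^+ s)%:E)%E.
Proof.
move=> mu0 muq q1 t0 tH; have q01 : 0 < q < 1 by apply/andP; split; lra.
have [x [mux xq hx]] := klr_ge_left mu0 muq q1 t0 tH.
have x1 : x <= 1 by lra.
have [rho rho01 chernoff] := chernoff_iid01 mu0 mux x1.
exists rho => // d T P X X_iid X01 EX0 s.
apply: le_trans (chernoff _ _ _ _ X_iid X01 EX0 s).
apply: le_measure; rewrite ?inE; [exact: measurable_klplus_lt | exact: measurable_sum_ge |].
exact: klplus_lt_sub_sum_ge.
Qed.

Theorem lemma3 (R : realType) (mua mu1 : R) :
  mua < mu1 -> mu1 < 1 ->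
  forall eps : R, 0 < eps ->
  exists C2 beta : R, 0 < C2 /\ 0 < beta /\
  forall (d : measure_display) (T : measurableType d) (P : probability T R)
         (X : nat -> {RV P >-> R}),
    iid P X ->
    (forall i w, 0 <= X i w <= 1) ->
    ('E_P[X 0%N] = mua%:E)%E ->
    forall n : nat, (3 <= n)%N ->
      (\sum_((Kn mua mu1 eps n).+1 <= s <oo)
         P [set w | klplus (emp_mean X s w) mu1 < kl mua mu1 * ((1 + eps)^-1)%:E]
       <= (C2 / n%:R `^ beta)%:E)%E.
Proof.
move=> mua_mu1 mu1_1 eps eps0.
have [mua_lt0|mua0] := ltP mua 0.
  exists 1, 1; split; first lra; split; first lra.
  by move=> d T P X _ X01 EX0; have := mean_ge0 X01 EX0; lra.
have mu1_01 : 0 < mu1 < 1 by apply/andP; split; lra.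
set D := klr mu1 mua; have D0 : 0 < D by exact: klr_gt0.
have D_kl : kl mua mu1 = D%:E by rewrite kl_klr.
have t0 : 0 <= D / (1 + eps) by rewrite divr_ge0 //; lra.
have tD : D / (1 + eps) < D by rewrite ltr_pdivrMr ?ltr_pMr //; lra.
have [rho rho01 deviation] := klplus_lt_geometric mua0 mua_mu1 mu1_1 t0 tD.
have /andP[r0 r1] := rho01.
set A := (1 + eps) / D; have A0 : 0 < A by rewrite divr_gt0 //; lra.
set c := 3 * ln (ln (3%:R : R)).
exists (expR (A * c * ln rho) / (1 - rho)), (- A * ln rho).
split; first by rewrite divr_gt0 ?expR_gt0 // subr_gt0.
split; first by rewrite mulNr oppr_gt0 pmulr_rlt0 // ln_lt0 // r0.
move=> d T P X X_iid X01 EX0 n n3; rewrite D_kl -EFinM.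
apply: (@le_trans _ _ (\sum_((Kn mua mu1 eps n).+1 <= s <oo) (rho ^+ s)%:E)%E).
  apply: lee_nneseries => [s _ _ | s _]; first exact: measure_ge0.
  exact: deviation.
apply: le_trans (nneseries_geometric_tail_le _ rho01) _.
rewrite lee_fin mulrAC ler_pM2r ?invr_gt0 ?subr_gt0 //.
apply: exprn_le_div_powR => //; first exact: leq_trans n3.
by have := @Kn_succ_ge R mua mu1 eps n; rewrite D_kl; apply.
Qed.
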